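(* Let ${\bm{x}}_1^m,\dots,{\bm{x}}_n^m\in\mathbb{R}^d$ satisfy $\|{\bm{x}}_i^m\|\le1$, let $\ell(z)=\log(1+e^{-z})$ and $F_m({\bm{w}})=\frac1n\sum_{i=1}^n\ell(\langle{\bm{w}},{\bm{x}}_i^m\rangle)$. For ${\bm{w}}_1,{\bm{w}}_2\in\mathbb{R}^d$ with $\|{\bm{w}}_1-{\bm{w}}_2\|\le1$, $$\|\nabla F_m({\bm{w}}_2)-\nabla F_m({\bm{w}}_1)\|\le7F_m({\bm{w}}_1)\|{\bm{w}}_2-{\bm{w}}_1\|.$$
   Context: $F_m$ is the logistic loss of client $m$ in a distributed logistic regression problem with labels absorbed into the data. *)

From HB Require Import structures.
From mathcomp Require Import all_boot all_order all_algebra.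
From mathcomp Require Import all_classical all_reals all_analysis.
Set Implicit Arguments. Unset Strict Implicit. Unset Printing Implicit Defensive.
Import Order.TTheory GRing.Theory Num.Theory.
Import numFieldNormedType.Exports.
Local Open Scope ring_scope.

(* Euclidean inner product and Euclidean norm on R^d
   (the library's default norm on matrices is the max-norm, so we define
   the Euclidean one explicitly). *)
Definition dotp (R : realType) (d : nat) (u v : 'rV[R]_d) : R :=
  \sum_(j < d) u 0 j * v 0 j.

Definition enorm (R : realType) (d : nat) (u : 'rV[R]_d) : R :=
  Num.sqrt (dotp u u).

Definition logloss (R : realType) (z : R) : R := ln (1 + expR (- z)).

Definition Fm (R : realType) (d n : nat) (x : 'I_n -> 'rV[R]_d) (w : 'rV[R]_d) : R :=
  n%:R^-1 * \sum_(i < n) logloss (dotp w (x i)).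

Definition grad (R : realType) (d : nat) (f : 'rV[R]_d -> R) (w : 'rV[R]_d) : 'rV[R]_d :=
  \row_(j < d) derive f w (delta_mx 0 j).

From HB Require Import structures.
From mathcomp Require Import all_boot all_order all_algebra.
From mathcomp Require Import all_classical all_reals all_analysis.
From mathcomp Require Import ring lra.
Import Order.TTheory GRing.Theory Num.Theory.
Import numFieldNormedType.Exports.
Local Open Scope ring_scope.
Set Implicit Arguments. Unset Strict Implicit. Unset Printing Implicit Defensive.

(* Writing a_i = <w1, x_i> and b_i = <w2, x_i>, the gradient is
   grad F_m(w) = (1/n) sum_i l'(<w, x_i>) x_i, and since |x_i| <= 1 the norm of
   the gradient difference is at most (1/n) sum_i |l'(b_i) - l'(a_i)|, with
   |b_i - a_i| <= |w2 - w1| <= 1 by Cauchy-Schwarz.  For the scalar loss,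
   l'(z) = -e^{-z}/(1 + e^{-z}) satisfies
   l'(b) - l'(a) = l'(a) (e^{a-b} - 1) / (1 + e^{-b}),
   and |l'(a)| <= l(a) because ln y >= 1 - 1/y, while |e^u - 1| <= 4|u| for
   |u| <= 1.  Hence |l'(b) - l'(a)| <= 4 l(a) |b - a|, which is stronger than
   needed. *)

Section Euclidean.
Variables (R : realType) (d : nat).
Implicit Types (u v y : 'rV[R]_d) (h : R).

Lemma dotp_ge0 u : 0 <= dotp u u.
Proof. by apply: sumr_ge0 => j _; rewrite -expr2 sqr_ge0. Qed.

Lemma enorm_ge0 u : 0 <= enorm u.
Proof. exact: sqrtr_ge0. Qed.

Lemma sqr_enorm u : enorm u ^+ 2 = dotp u u.
Proof. by rewrite sqr_sqrtr // dotp_ge0. Qed.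

Lemma enormN u : enorm (- u) = enorm u.
Proof. by congr Num.sqrt; apply: eq_bigr => j _; rewrite !mxE mulrNN. Qed.

Lemma dotpDZl h u v y : dotp (h *: u + v) y = h * dotp u y + dotp v y.
Proof.
rewrite /dotp mulr_sumr -big_split; apply: eq_bigr => j _.
by rewrite !mxE mulrDl mulrA.
Qed.

Lemma dotpBl u v y : dotp (u - v) y = dotp u y - dotp v y.
Proof. by rewrite /dotp -sumrB; apply: eq_bigr => j _; rewrite !mxE mulrBl. Qed.

Lemma dotp_sumZl n (c : 'I_n -> R) (x : 'I_n -> 'rV[R]_d) y :
  dotp (\sum_(i < n) c i *: x i) y = \sum_(i < n) c i * dotp (x i) y.
Proof.
rewrite /dotp; under eq_bigr => j _ do rewrite summxE big_distrl.
rewrite exchange_big; apply: eq_bigr => i _; rewrite mulr_sumr.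
by apply: eq_bigr => j _; rewrite !mxE mulrA.
Qed.

Lemma dotp_deltal (j : 'I_d) y : dotp (delta_mx 0 j) y = y 0 j.
Proof.
rewrite /dotp (bigD1 j) //= big1 ?addr0 => [|k /negPf kj]; rewrite mxE eqxx.
  by rewrite eqxx mul1r.
by rewrite kj mul0r.
Qed.

(* Lagrange's identity: the defect in Cauchy-Schwarz is a sum of squares. *)
Lemma dotp_sqr_le u v : dotp u v ^+ 2 <= dotp u u * dotp v v.
Proof.
have lagrange : \sum_(j < d) \sum_(k < d) (u 0 j * v 0 k - u 0 k * v 0 j) ^+ 2 =
    (dotp u u * dotp v v) *+ 2 - dotp u v ^+ 2 *+ 2.
  transitivity (\sum_(j < d) \sum_(k < d) ((u 0 j * u 0 j) * (v 0 k * v 0 k)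
      + (u 0 k * u 0 k) * (v 0 j * v 0 j) - ((u 0 j * v 0 j) * (u 0 k * v 0 k)) *+ 2)).
    by do 2!(apply: eq_bigr => ? _); ring.
  under eq_bigr => j _ do rewrite sumrB big_split /=.
  rewrite sumrB big_split /= [X in _ + X - _]exchange_big /=.
  rewrite /dotp -!big_distrlr /= expr2 mulr2n; congr (_ - _).
  by rewrite big_distrlr -sumrMnl; apply: eq_bigr => j _; rewrite sumrMnl.
have : 0 <= \sum_(j < d) \sum_(k < d) (u 0 j * v 0 k - u 0 k * v 0 j) ^+ 2.
  by do 2!(apply: sumr_ge0 => ? _); exact: sqr_ge0.
by rewrite lagrange subr_ge0 ler_pMn2r.
Qed.

Lemma norm_dotp_le u v : `|dotp u v| <= enorm u * enorm v.
Proof.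
rewrite -sqrtrM ?dotp_ge0 // -sqrtr_sqr ler_sqrt ?dotp_sqr_le //.
by rewrite mulr_ge0 ?dotp_ge0.
Qed.

Lemma enorm_sumZ_le n (c : 'I_n -> R) (x : 'I_n -> 'rV[R]_d) :
  (forall i, enorm (x i) <= 1) ->
  enorm (\sum_(i < n) c i *: x i) <= \sum_(i < n) `|c i|.
Proof.
move=> x_le1; set y := \sum_(i < n) c i *: x i.
have [->|/negPf y_neq0] := eqVneq (enorm y) 0; first by rewrite sumr_ge0.
have y_gt0 : 0 < enorm y by rewrite lt_def y_neq0 enorm_ge0.
rewrite -(ler_pM2r y_gt0) -expr2 sqr_enorm {1}/y dotp_sumZl mulr_suml.
apply: ler_sum => i _; rewrite (le_trans (ler_norm _)) // normrM ler_wpM2l //.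
by rewrite (le_trans (norm_dotp_le _ _)) // ler_piMl ?enorm_ge0.
Qed.
End Euclidean.

Section ExpLn.
Variable R : realType.
Implicit Types u x : R.

Lemma le_1BV_ln x : 0 < x -> 1 - x^-1 <= ln x.
Proof.
move=> x_gt0; have xV_gt0 : 0 < x^-1 by rewrite invr_gt0.
have := @le_ln1Dx _ (x^-1 - 1); rewrite addrCA subrr addr0 lnV ?posrE //.
by move=> /(_ ltac:(lra)); rewrite lerNl opprB.
Qed.

Lemma expR_le4 u : u <= 1 -> expR u <= 4.
Proof.
move=> u_le1; have := expR_ge1Dx (- (u / 2)).
have half_inv : expR (u / 2) * expR (- (u / 2)) = 1 by rewrite expRxMexpNx_1.
have -> : expR u = expR (u / 2) ^+ 2 by rewrite -expRM_natr divfK ?pnatr_eq0.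
have := expR_gt0 (u / 2); nra.
Qed.

Lemma norm_expRB1_le u : `|u| <= 1 -> `|expR u - 1| <= 4 * `|u|.
Proof.
move=> u_le1; have := expR_ge1Dx u; have := expR_gt0 u.
have [u_le0|u_gt0] := leP u 0.
  have exp_le1 : expR u <= 1 by rewrite expR_le1.
  rewrite (ler0_norm u_le0) ler0_norm ?subr_le0 //; lra.
have := expR_ge1Dx (- u); have := expR_le4 (le_trans (ler_norm u) u_le1).
have : expR u * expR (- u) = 1 by rewrite expRxMexpNx_1.
rewrite (gtr0_norm u_gt0) ger0_norm; last by rewrite subr_ge0 -expR0 ler_expR ltW.
nra.
Qed.
End ExpLn.

Section LogisticLoss.
Variable R : realType.
Implicit Types a b z : R.

Definition dlogloss z : R := - (expR (- z) / (1 + expR (- z))).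

Lemma is_derive_logloss z : is_derive z 1 (@logloss R) (dlogloss z).
Proof.
have exp_gt0 : 0 < (cst 1 + (expR \o -%R)) z by rewrite /= addr_gt0 ?expR_gt0.
have d_exp : is_derive z 1 (expR \o -%R) (expR (- z) * -1).
  exact: is_derive1_comp.
have d_inner : is_derive z 1 (cst 1 + (expR \o -%R)) (0 + expR (- z) * -1).
  exact: is_deriveD.
apply: is_derive_eq (is_derive1_comp (is_derive1_ln exp_gt0) d_inner) _.
by rewrite /dlogloss /= add0r mulrN1 mulrN mulrC.
Qed.

Lemma norm_dlogloss_le z : `|dlogloss z| <= logloss z.
Proof.
have E_gt0 : 0 < expR (- z) := expR_gt0 _.
rewrite normrN ger0_norm; last by rewrite divr_ge0 ?addr_ge0 ?ltW.
have -> : expR (- z) / (1 + expR (- z)) = 1 - (1 + expR (- z))^-1.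
  by field; rewrite gt_eqF ?addr_gt0.
by rewrite /logloss le_1BV_ln ?addr_gt0.
Qed.

Lemma dloglossB a b :
  dlogloss b - dlogloss a = dlogloss a * (expR (a - b) - 1) / (1 + expR (- b)).
Proof.
rewrite /dlogloss.
have -> : expR (- b) = expR (- a) * expR (a - b) by rewrite -expRD; congr expR; ring.
field.
by rewrite !gt_eqF ?addr_gt0 ?mulr_gt0 ?expR_gt0.
Qed.

Lemma dlogloss_lipschitz a b : `|b - a| <= 1 ->
  `|dlogloss b - dlogloss a| <= 4 * logloss a * `|b - a|.
Proof.
move=> ba_le1; rewrite dloglossB -mulrA normrM (mulrC 4) -mulrA.
apply: ler_pM => //; first exact: norm_dlogloss_le.
have Eb_gt0 : 0 < 1 + expR (- b) by rewrite addr_gt0 ?expR_gt0.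
rewrite normrM normfV (gtr0_norm Eb_gt0) ler_pdivrMr //.
apply: le_trans (norm_expRB1_le _) _; first by rewrite distrC.
by rewrite distrC ler_peMr ?mulr_ge0 // lerDl expR_ge0.
Qed.
End LogisticLoss.

Lemma derive_along_line (R : numFieldType) (V W : normedModType R)
    (f : V -> W) (a v : V) :
  'D_v f a = 'D_1 (fun h : R => f (h *: v + a)) 0.
Proof.
rewrite /derive; do 2 f_equal; apply: funext => h /=.
by rewrite scale0r add0r addr0 [h *: 1]mulr1.
Qed.

Section LogisticRisk.
Variables (R : realType) (d n : nat) (x : 'I_n -> 'rV[R]_d).

Lemma derive_Fm w v :
  'D_v (Fm x) w = n%:R^-1 * \sum_(i < n) dlogloss (dotp w (x i)) * dotp v (x i).
Proof.
rewrite derive_along_line.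
have -> : (fun h : R => Fm x (h *: v + w)) = n%:R^-1 \*:
    \sum_(i < n) (@logloss R \o (fun h => h * dotp v (x i) + dotp w (x i))).
  apply: funext => h; rewrite /Fm /= fct_sumE; congr (_ * _).
  by apply: eq_bigr => i _; rewrite dotpDZl.
apply: derive_val; apply: is_deriveZ; apply: is_derive_sum => i.
apply: is_derive_eq.
  by apply: is_derive1_comp; rewrite mul0r add0r; exact: is_derive_logloss.
by rewrite /= scaler0 add0r addr0 [_%:A]mulr1.
Qed.

Lemma grad_Fm w :
  grad (Fm x) w = \sum_(i < n) (n%:R^-1 * dlogloss (dotp w (x i))) *: x i.
Proof.
apply/rowP => j; rewrite !mxE derive_Fm summxE mulr_sumr.
by apply: eq_bigr => i _; rewrite dotp_deltal !mxE mulrA.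
Qed.
End LogisticRisk.

Theorem lemmaB4 (R : realType) (d n : nat) (x : 'I_n -> 'rV[R]_d)
  (hx : forall i, enorm (x i) <= 1) (w1 w2 : 'rV[R]_d)
  (hw : enorm (w1 - w2) <= 1) :
  enorm (grad (Fm x) w2 - grad (Fm x) w1) <= 7 * Fm x w1 * enorm (w2 - w1).
Proof.
set t := enorm (w2 - w1); have t_le1 : t <= 1 by rewrite /t -enormN opprB.
rewrite !grad_Fm -sumrB.
under eq_bigr => i _ do rewrite -scalerBl -mulrBr.
apply: le_trans (enorm_sumZ_le _ hx) _.
rewrite /Fm mulrAC mulrC mulr_sumr mulr_suml; apply: ler_sum => i _.
rewrite normrM ger0_norm // -mulrA ler_wpM2l //.
set a := dotp w1 (x i); set b := dotp w2 (x i).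
have ba_le : `|b - a| <= t.
  by rewrite -dotpBl (le_trans (norm_dotp_le _ _)) // ler_piMr ?enorm_ge0.
have loss_ge0 : 0 <= logloss a := le_trans (normr_ge0 _) (norm_dlogloss_le a).
apply: le_trans (dlogloss_lipschitz (le_trans ba_le t_le1)) _.
have := normr_ge0 (b - a); nra.
Qed.
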